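(* Let $p_1\le p_2\le\dots\le p_m$ be a probability distribution on $m$ urns, and let $C$ be the number of balls thrown independently into the urns according to this distribution until every urn contains at least one ball. Then, for large values of $m$, \[ \frac{1}{p_1}\le E[C]\le 2\,H_m\,\frac{1}{p_1}, \] where $H_m=\sum_{j=1}^m 1/j$. *)

From HB Require Import structures.
From mathcomp Require Import all_boot all_order all_algebra.
From mathcomp Require Import all_classical all_reals all_analysis.
Set Implicit Arguments. Unset Strict Implicit. Unset Printing Implicit Defensive.
Import Order.TTheory GRing.Theory Num.Theory.
Local Open Scope ring_scope.

(* Balls are thrown independently; ball k lands in urn s k with prob p (s k).
   [cc_cdf p t] = P(C <= t) = probability that after t throws every urn is
   nonempty, computed over the product space of outcome sequences. *)
Definition cc_cdf (R : realType) (m : nat) (p : 'I_m -> R) (t : nat) : R :=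
  \sum_(s : {ffun 'I_t -> 'I_m} | [forall i : 'I_m, exists k : 'I_t, s k == i])
     \prod_(k < t) p (s k).

Definition cc_pmf (R : realType) (m : nat) (p : 'I_m -> R) (t : nat) : R :=
  cc_cdf p t - cc_cdf p t.-1.

Definition cc_expect (R : realType) (m : nat) (p : 'I_m -> R) : \bar R :=
  (\sum_(1 <= t <oo) ((t%:R * cc_pmf p t)%:E))%E.

Definition harmonic_num (R : realType) (m : nat) : R := \sum_(j < m) (j.+1%:R)^-1.

From Pilot Require Import Defs.
From HB Require Import structures.
From mathcomp Require Import all_boot all_order all_algebra.
From mathcomp Require Import all_classical all_reals all_analysis.
From mathcomp Require Import ring lra.
Set Implicit Arguments. Unset Strict Implicit. Unset Printing Implicit Defensive.
Import Order.TTheory GRing.Theory Num.Theory.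
Local Open Scope classical_set_scope.
Local Open Scope ring_scope.

(* Let G t = 1 - cc_cdf p t = P(C > t). Urn i is still empty after t throws with
   probability (1 - p i)^t, so (1 - p1)^t <= G t <= m (1 - p1)^t, the upper bound being
   the union bound. Summation by parts turns the partial sums of E[C] into
   \sum_(t < n) (G t - G n). From below these dominate \sum_(t < k) (1 - p1)^t - k m (1 - p1)^n,
   which tends to 1 / p1. From above, split \sum_t G t at t0 ~ H_m / p1: the first t0 terms
   are at most 1, and since (1 - p1)^t0 <= exp (- H_m) <= 1 / (m + 1) the remaining ones add
   up to at most 1 / p1; finally H_m / p1 + 1 + 1 / p1 <= 2 H_m / p1 once m >= 2. *)

Lemma sum_ffun_prod (R : comRingType) (I : finType) (t : nat) (w : I -> R) :
  \sum_(s : {ffun 'I_t -> I}) \prod_(k < t) w (s k) = (\sum_j w j) ^+ t.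
Proof.
by rewrite -[in RHS](card_ord t) -prodr_const (bigA_distr_bigA (fun _ j => w j)).
Qed.

Section FfunSnoc.
Variables (I : finType) (t : nat).

Definition ffun_rcons (s : {ffun 'I_t -> I}) (j : I) : {ffun 'I_t.+1 -> I} :=
  [ffun k => if unlift ord_max k is Some k' then s k' else j].

Lemma ffun_rcons_lift s j k : ffun_rcons s j (lift ord_max k) = s k.
Proof. by rewrite ffunE liftK. Qed.

Lemma ffun_rcons_max s j : ffun_rcons s j ord_max = j.
Proof. by rewrite ffunE unlift_none. Qed.

Lemma ffun_rcons_bij : bijective (fun x : {ffun 'I_t -> I} * I => ffun_rcons x.1 x.2).
Proof.
exists (fun s : {ffun 'I_t.+1 -> I} => ([ffun k => s (lift ord_max k)], s ord_max)).
  move=> [s j]; rewrite /= ffun_rcons_max; congr pair.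
  by apply/ffunP => k; rewrite ffunE ffun_rcons_lift.
move=> s; apply/ffunP => k; rewrite ffunE /=.
by case: unliftP => [k' ->|->] //=; rewrite ffunE.
Qed.

Lemma big_ffun_recr (R : nmodType) (F : {ffun 'I_t.+1 -> I} -> R) :
  \sum_s F s = \sum_(s : {ffun 'I_t -> I}) \sum_j F (ffun_rcons s j).
Proof.
by rewrite pair_big /= (reindex _ (onW_bij _ ffun_rcons_bij)).
Qed.

Lemma prod_ffun_rcons (R : comRingType) (w : I -> R) s j :
  \prod_(k < t.+1) w (ffun_rcons s j k) = \prod_(k < t) w (s k) * w j.
Proof.
rewrite big_ord_recr /= ffun_rcons_max; congr (_ * _); apply: eq_bigr => k _.
by rewrite -(ffun_rcons_lift s j); congr (w (ffun_rcons s j _)); apply/val_inj/esym/lift_max.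
Qed.

End FfunSnoc.

Lemma near_mulr_expr_le (R : realType) (c q e : R) : 0 <= q < 1 -> 0 < e ->
  \forall n \near \oo, c * q ^+ n <= e.
Proof.
move=> /andP[q0 q1] e0.
have /cvgrPdist_le/(_ e e0) : geometric c q n @[n --> \oo] --> 0.
  by apply: cvg_geometric; rewrite ger0_norm.
by apply: filterS => n; rewrite sub0r normrN /=; apply: le_trans; rewrite ler_norm.
Qed.

Lemma mulr_sum_expr (R : comRingType) (q : R) n :
  (\sum_(t < n) q ^+ t) * (1 - q) = 1 - q ^+ n.
Proof. by rewrite -[RHS]opprB subrX1; ring. Qed.

Lemma sum_expr_le_inv (R : realFieldType) (q : R) n : 0 <= q < 1 ->
  \sum_(t < n) q ^+ t <= (1 - q)^-1.
Proof.
move=> /andP[q0 q1]; have q1' : 0 < 1 - q by rewrite subr_gt0.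
rewrite -(ler_pM2r q1') mulVf ?gt_eqF // mulr_sum_expr gerBl; exact: exprn_ge0.
Qed.

Lemma summation_by_parts (R : comRingType) (F : nat -> R) n : F 0%N = 0 ->
  \sum_(1 <= t < n.+1) t%:R * (F t - F t.-1) = \sum_(t < n) (F n - F t).
Proof.
move=> F0; elim: n => [|n IH]; first by rewrite big_geq // big_ord0.
by rewrite big_nat_recr //= IH big_ord_recr /= !sumrB !sumr_const !card_ord -natr1; ring.
Qed.

Lemma sum_le_geometric_tail (R : realFieldType) (g : nat -> R) (c q : R) t0 n :
  0 <= q < 1 -> (forall t, 0 <= g t <= 1) -> (forall t, g t <= c * q ^+ t) ->
  c * q ^+ t0 <= 1 -> \sum_(t < n) g t <= t0%:R + (1 - q)^-1.
Proof.
move=> /andP[q0 q1] g01 gc ct0.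
have g0 t : 0 <= g t by case/andP: (g01 t).
rewrite -(big_mkord xpredT g) (le_trans (y := \sum_(0 <= t < t0 + n) g t)) //.
  by rewrite (big_cat_nat _ (leq_addl _ _)) //= lerDl sumr_ge0.
rewrite (big_cat_nat _ (leq_addr _ _)) //= lerD //.
  rewrite -[t0 in leRHS]subn0 -mulr_natl mulr1 -sumr_const_nat.
  by apply: ler_sum => t _; case/andP: (g01 t).
rewrite -{1}[t0]add0n big_addn addKn big_mkord.
apply: le_trans (sum_expr_le_inv n _); last by rewrite q0.
apply: ler_sum => t _; rewrite (le_trans (gc _)) //.
by rewrite addnC exprD mulrA ler_piMl // exprn_ge0.
Qed.

Lemma expR_harmonic_num_ge (R : realType) m : m.+1%:R <= expR (harmonic_num R m).
Proof.
elim: m => [|m IH]; first by rewrite /harmonic_num big_ord0 expR0.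
rewrite /harmonic_num big_ord_recr /= -/(harmonic_num R m) expRD.
have m1_gt0 : 0 < m.+1%:R :> R by rewrite ltr0n.
have -> : m.+2%:R = m.+1%:R * (1 + m.+1%:R^-1) :> R.
  by rewrite mulrDr mulr1 mulfV ?gt_eqF // -natr1.
by rewrite ler_pM ?addr_ge0 ?invr_ge0 ?ler0n ?expR_ge1Dx.
Qed.

Lemma harmonic_num_ge (R : realType) m : (2 <= m)%N -> 3 / 2 <= harmonic_num R m.
Proof.
case: m => [|[|m]] // _; rewrite /harmonic_num !big_ord_recl /= invr1.
have -> : ((bump 0 0).+1%:R : R) = 2 by [].
have : 0 <= \sum_(i < m) (bump 0 (bump 0 i)).+1%:R^-1 :> R.
  by rewrite sumr_ge0 // => i _; rewrite invr_ge0.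
lra.
Qed.

Lemma expr_le_inv_harmonic (R : realType) (x : R) m t : 0 <= x <= 1 ->
  harmonic_num R m <= t%:R * x -> m.+1%:R * (1 - x) ^+ t <= 1.
Proof.
move=> /andP[x0 x1] Hle.
have E_gt0 := expR_gt0 (harmonic_num R m).
have q_le : (1 - x) ^+ t <= (expR (harmonic_num R m))^-1.
  apply: le_trans (_ : expR (- x) ^+ t <= _).
    by apply: lerXn2r; rewrite ?nnegrE ?expR_ge0 ?subr_ge0 //; have := expR_ge1Dx (- x); lra.
  by rewrite -expRM_natl -expRN ler_expR mulrN lerN2.
rewrite (le_trans (ler_wpM2l (ler0n _ _) q_le)) // mulrC.
by rewrite ler_pdivrMl // mulr1 expR_harmonic_num_ge.
Qed.

Lemma ler_sum_subset (R : numDomainType) (I : finType) (P Q : pred I) (F : I -> R) :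
  {subset P <= Q} -> (forall i, Q i -> 0 <= F i) ->
  \sum_(i | P i) F i <= \sum_(i | Q i) F i.
Proof.
move=> PQ F0; rewrite [leRHS](bigID P) /=.
rewrite (eq_bigl P) => [|i]; last by apply: andb_idl => /PQ.
by rewrite lerDl sumr_ge0 // => i /andP[/F0].
Qed.

Section Coupon.
Variables (R : realType) (m : nat) (p : 'I_m -> R).
Hypotheses (p_ge0 : forall i, 0 <= p i) (p_sum1 : \sum_i p i = 1).

Definition covers t (s : {ffun 'I_t -> 'I_m}) := [forall i, exists k, s k == i].
Definition misses t (i : 'I_m) (s : {ffun 'I_t -> 'I_m}) := [forall k, s k != i].

Lemma coversPn t (s : {ffun 'I_t -> 'I_m}) : reflect (exists i, misses i s) (~~ covers s).
Proof.
rewrite negb_forall; apply: (iffP existsP) => -[i]; rewrite ?negb_exists => miss_i.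
  by exists i.
by exists i; rewrite negb_exists.
Qed.

Definition cc_tail t := 1 - cc_cdf p t.

Lemma sum_prod_ffun1 t : \sum_(s : {ffun 'I_t -> 'I_m}) \prod_(k < t) p (s k) = 1.
Proof. by rewrite sum_ffun_prod p_sum1 expr1n. Qed.

Lemma cc_tailE t :
  cc_tail t = \sum_(s : {ffun 'I_t -> 'I_m} | ~~ covers s) \prod_(k < t) p (s k).
Proof.
by rewrite /cc_tail -{1}(sum_prod_ffun1 t) (bigID (@covers t)) /= addrAC subrr add0r.
Qed.

Lemma sum_misses t i :
  \sum_(s : {ffun 'I_t -> 'I_m} | misses i s) \prod_(k < t) p (s k) = (1 - p i) ^+ t.
Proof.
have -> : 1 - p i = \sum_j p j * (j != i)%:R.
  rewrite -{1}p_sum1 (bigD1 i) //= [in RHS](bigD1 i) //= eqxx mulr0 add0r addrAC subrr add0r.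
  by apply: eq_bigr => j ji; rewrite ji mulr1.
rewrite -(sum_ffun_prod _ (fun j => p j * (j != i)%:R)) big_mkcond.
apply: eq_bigr => s _; rewrite big_split /=.
case: (boolP (misses i s)) => [/forallP miss | /forallPn [k]].
  by rewrite [X in _ * X]big1 ?mulr1 // => k _; rewrite miss.
by rewrite negbK => /eqP sk; rewrite [X in _ * X](bigD1 k) //= sk eqxx mul0r mulr0.
Qed.

Lemma cc_tail_le_sum t : cc_tail t <= \sum_i (1 - p i) ^+ t.
Proof.
rewrite cc_tailE; under [X in _ <= X]eq_bigr => i _ do rewrite -(sum_misses t i).
rewrite (exchange_big_dep (fun s => ~~ covers s)) /=; last first.
  by move=> i s _ miss; apply/coversPn; exists i.
apply: ler_sum => s /coversPn [i miss].
by rewrite (bigD1 i) //= lerDl sumr_ge0 // => j _; rewrite prodr_ge0.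
Qed.

Lemma expr_le_cc_tail t i : (1 - p i) ^+ t <= cc_tail t.
Proof.
rewrite cc_tailE -sum_misses; apply: ler_sum_subset => [s miss|s _].
  by apply/coversPn; exists i.
by rewrite prodr_ge0.
Qed.

Lemma cc_cdf_ge0 t : 0 <= cc_cdf p t.
Proof. by rewrite sumr_ge0 // => s _; rewrite prodr_ge0. Qed.

Lemma cc_cdf0 (i : 'I_m) : cc_cdf p 0 = 0.
Proof.
by rewrite /cc_cdf big_pred0 // => s; apply/negbTE/negP => /forallP/(_ i)/existsP[[]].
Qed.

Lemma covers_rcons t (s : {ffun 'I_t -> 'I_m}) j : covers s -> covers (ffun_rcons s j).
Proof.
move=> /forallP cov; apply/forallP => i; have /existsP[k /eqP <-] := cov i.
by apply/existsP; exists (lift ord_max k); rewrite ffun_rcons_lift.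
Qed.

Lemma cc_cdf_le_succ t : cc_cdf p t <= cc_cdf p t.+1.
Proof.
(* One more ball keeps a covering sequence covering, and its extensions carry the same mass. *)
apply: (@le_trans _ _
  (\sum_(s : {ffun 'I_t -> 'I_m} | covers s) \sum_j \prod_(k < t.+1) p (ffun_rcons s j k))).
  apply: ler_sum => s _.
  by rewrite (eq_bigr _ (fun j _ => prod_ffun_rcons p s j)) -mulr_sumr p_sum1 mulr1.
rewrite /cc_cdf [leRHS]big_mkcond big_ffun_recr big_mkcond /=.
apply: ler_sum => s _; case: ifP => cov.
  by apply: ler_sum => j _; rewrite ifT //; apply: covers_rcons.
by rewrite sumr_ge0 // => j _; case: ifP => // _; rewrite prodr_ge0.
Qed.

Lemma cc_expect_term_ge0 t : (0 <= (t%:R * cc_pmf p t)%:E)%E.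
Proof.
rewrite lee_fin mulr_ge0 //.
by case: t => [|t]; rewrite /cc_pmf ?subrr // subr_ge0 cc_cdf_le_succ.
Qed.

Lemma cc_tail_ge0 t : 0 <= cc_tail t.
Proof.
by rewrite /cc_tail subr_ge0 -(sum_prod_ffun1 t) ler_sum_subset // => s _; rewrite prodr_ge0.
Qed.

Lemma cc_tail_le1 t : cc_tail t <= 1.
Proof. by rewrite /cc_tail gerBl cc_cdf_ge0. Qed.

Lemma cc_tail_nonincreasing t n : (t <= n)%N -> cc_tail n <= cc_tail t.
Proof.
move=> tn; rewrite lerD2l lerN2.
by move: t n tn; apply/(nondecreasing_seqP (cc_cdf p)) => n; rewrite cc_cdf_le_succ.
Qed.

Lemma cc_expect_partial_sum (i : 'I_m) n :
  \sum_(1 <= t < n.+1) t%:R * cc_pmf p t = \sum_(t < n) (cc_tail t - cc_tail n).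
Proof.
rewrite summation_by_parts ?(cc_cdf0 i) //.
by apply: eq_bigr => t _; rewrite /cc_tail; ring.
Qed.

Lemma p_le1 i : p i <= 1.
Proof. by rewrite -p_sum1 (bigD1 i) //= lerDl sumr_ge0. Qed.

Variable i0 : 'I_m.
Hypotheses (p_min : forall i, p i0 <= p i) (p_i0_gt0 : 0 < p i0).

Lemma cc_tail_le_min t : cc_tail t <= m%:R * (1 - p i0) ^+ t.
Proof.
apply: le_trans (cc_tail_le_sum t) _; rewrite mulr_natl -[m in leRHS]card_ord -sumr_const.
apply: ler_sum => i _; rewrite lerXn2r ?nnegrE ?subr_ge0 ?p_le1 //.
by rewrite lerD2l lerN2.
Qed.

Lemma cc_expect_ge : ((p i0)^-1%:E <= cc_expect p)%E.
Proof.
set x := p i0; set q := 1 - x.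
have q01 : 0 <= q < 1 by rewrite /q subr_ge0 p_le1 /= gtrBl.
apply/lee_addgt0Pr => e e0.
(* First k with q^k / x small, then n >= k with k m q^n small. *)
have e2 : 0 < e / 2 by rewrite divr_gt0.
have [k _ /(_ k (leqnn k))/= qk] := near_mulr_expr_le x^-1 q01 e2.
have [N _ hN] := near_mulr_expr_le (k%:R * m%:R) q01 e2.
set n := maxn k N; have kn : (k <= n)%N := leq_maxl k N.
have /= qn := hN n (leq_maxr k N).
apply: le_trans (leeD2r _ (nneseries_lim_ge n.+1 (fun t _ _ => cc_expect_term_ge0 t))).
rewrite sumEFin -EFinD lee_fin cc_expect_partial_sum //.
have geo : \sum_(t < k) q ^+ t = (1 - q ^+ k) / x.
  by rewrite -mulr_sum_expr /q subKr mulfK ?gt_eqF.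
have : \sum_(t < k) (q ^+ t - m%:R * q ^+ n) <= \sum_(t < n) (cc_tail t - cc_tail n).
  rewrite (big_ord_widen n (fun t => q ^+ t - m%:R * q ^+ n) kn).
  rewrite [leRHS](bigID (fun t : 'I_n => (t < k)%N)) /=.
  rewrite -[leLHS]addr0 lerD //.
    by apply: ler_sum => t _; rewrite lerB ?expr_le_cc_tail ?cc_tail_le_min.
  by rewrite sumr_ge0 // => t _; rewrite subr_ge0 cc_tail_nonincreasing // ltnW.
rewrite sumrB geo sumr_const card_ord -[_ *+ k]mulr_natl mulrA mulrBl mul1r [_ / x]mulrC.
lra.
Qed.

Lemma cc_expect_le : (2 <= m)%N ->
  (cc_expect p <= (2 * harmonic_num R m / p i0)%:E)%E.
Proof.
move=> m_ge2; set x := p i0; set H := harmonic_num R m; set q := 1 - x.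
have x_le1 : x <= 1 := p_le1 i0.
have q01 : 0 <= q < 1 by rewrite /q subr_ge0 x_le1 /= gtrBl.
have mx : m%:R * x <= 1.
  rewrite -[leRHS]p_sum1 mulr_natl -[m in leLHS]card_ord -sumr_const.
  by apply: ler_sum => i _; apply: p_min.
have H_ge : 3 / 2 <= H := harmonic_num_ge R m_ge2.
have m_ge2R : 2 <= m%:R :> R by rewrite ler_nat.
have Hx0 : 0 <= H / x by rewrite divr_ge0 // ?ltW //; lra.
set t0 := (Num.truncn (H / x)).+1.
have /andP[t0_lb t0_ub] := truncn_itv Hx0.
(* t0 > H / x, hence q^t0 <= exp (- H) <= 1 / (m + 1). *)
have ct0 : m%:R * q ^+ t0 <= 1.
  apply: le_trans (expr_le_inv_harmonic (m := m) (t := t0) (_ : 0 <= x <= 1) _);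
    last 2 first.
  - by rewrite x_le1 ltW.
  - by rewrite -ler_pdivrMr // ltW.
  by rewrite ler_wpM2r ?exprn_ge0 ?ler_nat //; case/andP: q01.
have sum_tail_le n : \sum_(t < n) cc_tail t <= 2 * H / x.
  have tail01 t : 0 <= cc_tail t <= 1 by rewrite cc_tail_ge0 cc_tail_le1.
  apply: le_trans (sum_le_geometric_tail n q01 tail01 cc_tail_le_min ct0) _.
  have t0_le : t0%:R <= H / x + 1 by rewrite -natr1 lerD2r.
  have x_half : x <= 1 / 2 by nra.
  have : 1 + x^-1 <= H / x.
    by rewrite ler_pdivlMr // mulrDl mul1r mulVf ?gt_eqF //; lra.
  rewrite /q subKr -mulrA; lra.
rewrite /cc_expect; apply: lime_le (is_cvg_nneseries (fun t _ _ => cc_expect_term_ge0 t)) _.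
apply: nearW => -[|n]; rewrite sumEFin lee_fin.
  by rewrite big_geq // divr_ge0 // ?ltW //; lra.
rewrite cc_expect_partial_sum //; apply: le_trans (sum_tail_le n).
by apply: ler_sum => t _; rewrite gerBl cc_tail_ge0.
Qed.

End Coupon.

Theorem theorem8 (R : realType) : exists M : nat, forall (m : nat) (hm : (0 < m)%N),
  (M <= m)%N ->
  forall p : 'I_m -> R,
    (forall i, 0 < p i) ->
    \sum_(i < m) p i = 1 ->
    (forall i j : 'I_m, (i <= j)%N -> p i <= p j) ->
    let p1 := p (Ordinal hm) in
    ((p1^-1)%:E <= cc_expect p)%E /\ (cc_expect p <= (2 * @Defs.harmonic_num R m / p1)%:E)%E.
Proof.
exists 2%N => m hm m_ge2 p p_gt0 p_sum1 p_mono p1.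
have p_ge0 i : 0 <= p i by rewrite ltW.
have p_min i : p1 <= p i by apply: p_mono.
split; first exact: cc_expect_ge.
exact: cc_expect_le.
Qed.
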